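(* Let $K$ be a field of characteristic $0$ and $\mathcal{H}$ a finite-dimensional associative $K$-algebra with $1$ which is split semisimple and symmetric with trace form $\tau\colon\mathcal{H}\to K$, and let $\dagger\colon\mathcal{H}\to\mathcal{H}$, $h\mapsto h^\dagger$, be a $K$-linear anti-involution. Assume $B_0$ is a $\dagger$-symmetric basis of $\mathcal{H}$. For a simple $\mathcal{H}$-module $E$ define $$\nu_E:=\frac{1}{c_E\dim E}\sum_{b\in B_0}\chi_E(b^2).$$ Then $\nu_E\in\{0,\pm1\}$, and: (a) $\nu_E=0$ if and only if $E\not\cong\hat E$; (b) $\nu_E=1$ if and only if $E\cong\hat E$ and there exists a non-degenerate symmetric $\mathcal{H}$-invariant bilinear form on $E$; (c) $\nu_E=-1$ if and only if $E\cong\hat E$ and there exists a non-degenerate alternating $\mathcal{H}$-invariant bilinear form on $E$. In particular $\nu_E$ does not depend on the choice of $B_0$.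
   Context: $\mathrm{Irr}(\mathcal{H})$ denotes the set of simple $\mathcal{H}$-modules up to isomorphism; $\chi_E(h)=\mathrm{trace}(h,E)$. The Schur elements $c_E\in K\setminus\{0\}$ are defined by $\tau=\sum_{E\in\mathrm{Irr}(\mathcal{H})}c_E^{-1}\chi_E$. The contragredient $\hat M$ of a finite-dimensional left $\mathcal{H}$-module $M$ is $\mathrm{Hom}_K(M,K)$ with $(h.f)(m)=f(h^\dagger.m)$. A bilinear form $(\,,)$ on $M$ is $\mathcal{H}$-invariant if $(h.m,m')=(m,h^\dagger.m')$ for all $h\in\mathcal{H}$, $m,m'\in M$. For a basis $B$ of $\mathcal{H}$, the dual basis $B^\vee=\{b^\vee\}$ is defined by $\tau(b'b^\vee)=\delta_{b,b'}$. A basis $B_0$ is $\dagger$-symmetric if $b^\dagger=b^\vee$ for all $b\in B_0$. *)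

From HB Require Import structures.
From mathcomp Require Import all_boot all_order all_algebra.
From mathcomp Require Import falgebra.
Set Implicit Arguments. Unset Strict Implicit. Unset Printing Implicit Defensive.
Import GRing.Theory.
Local Open Scope ring_scope.

Section HeckeDefs.
Variables (K : fieldType) (H : falgType K).

Definition symmetrizing_trace (tau : H -> K) : Prop :=
  (forall (a : K) (x y : H), tau (a *: x + y) = a * tau x + tau y) /\
  (forall x y : H, tau (x * y) = tau (y * x)) /\
  (forall x : H, (forall y : H, tau (x * y) = 0) -> x = 0).

Definition anti_involution (dag : H -> H) : Prop :=
  (forall (a : K) (x y : H), dag (a *: x + y) = a *: dag x + dag y) /\
  (forall x y : H, dag (x * y) = dag y * dag x) /\
  (forall x : H, dag (dag x) = x).

Definition left_ideal (L : {vspace H}) : Prop :=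
  forall h x : H, x \in L -> h * x \in L.

(* H semisimple: the regular left module is semisimple, i.e. every left
   ideal has a complementary left ideal. *)
Definition semisimple_alg : Prop :=
  forall L : {vspace H}, left_ideal L ->
    exists2 L' : {vspace H}, left_ideal L' &
      ((L + L')%VS = fullv /\ (L :&: L')%VS = 0%VS).

(* A finite-dimensional left H-module of dimension d written in a K-basis:
   an algebra morphism rho : H -> 'M[K]_d, h acting on column vectors
   v : 'cV_d by v |-> rho h *m v. *)
Definition is_rep (d : nat) (rho : H -> 'M[K]_d) : Prop :=
  (forall (a : K) (x y : H), rho (a *: x + y) = a *: rho x + rho y) /\
  rho 1 = 1%:M /\
  (forall x y : H, rho (x * y) = rho x *m rho y).

(* Submodules: a subspace of K^d, given as the row space of U whose rows are
   the transposes of the vectors of the subspace, stable under the action. *)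
Definition rep_submodule (d : nat) (rho : H -> 'M[K]_d) (U : 'M[K]_d) : Prop :=
  forall h : H, (U *m (rho h)^T <= U)%MS.

Definition rep_simple (d : nat) (rho : H -> 'M[K]_d) : Prop :=
  is_rep rho /\ (0 < d)%N /\
  forall U : 'M[K]_d, rep_submodule rho U -> U = 0 \/ (1%:M <= U)%MS.

Definition rep_iso (d1 d2 : nat) (rho1 : H -> 'M[K]_d1) (rho2 : H -> 'M[K]_d2)
  : Prop :=
  exists P : 'M[K]_(d2, d1),
    [/\ row_free P, row_full P & forall h : H, P *m rho1 h = rho2 h *m P].

Definition split_semisimple_alg : Prop :=
  semisimple_alg /\
  forall (d : nat) (rho : H -> 'M[K]_d), rep_simple rho ->
    forall A : 'M[K]_d, (forall h : H, A *m rho h = rho h *m A) ->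
      exists a : K, A = a%:M.

Definition rep_char (d : nat) (rho : H -> 'M[K]_d) (h : H) : K := \tr (rho h).

(* contragredient module Hom_K(E,K), (h.f)(m) = f(h^dag.m), written in the
   dual basis: a functional f is a column vector with f(m) = f^T m, so
   h.f = (rho (h^dag))^T *m f. *)
Definition contragredient (dag : H -> H) (d : nat) (rho : H -> 'M[K]_d)
  : H -> 'M[K]_d := fun h => (rho (dag h))^T.

Definition bform (d : nat) (M : 'M[K]_d) (v w : 'cV[K]_d) : K :=
  (v^T *m M *m w) 0 0.

Definition bform_nondegenerate (d : nat) (M : 'M[K]_d) : Prop :=
  (forall v, (forall w, bform M v w = 0) -> v = 0) /\
  (forall w, (forall v, bform M v w = 0) -> w = 0).

Definition bform_symmetric (d : nat) (M : 'M[K]_d) : Prop :=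
  forall v w, bform M v w = bform M w v.

Definition bform_alternating (d : nat) (M : 'M[K]_d) : Prop :=
  forall v, bform M v v = 0.

Definition bform_invariant (dag : H -> H) (d : nat) (rho : H -> 'M[K]_d)
  (M : 'M[K]_d) : Prop :=
  forall (h : H) (v w : 'cV[K]_d),
    bform M (rho h *m v) w = bform M v (rho (dag h) *m w).

(* B is a dag-symmetric basis w.r.t. tau: B is a basis of H and
   b^dag = b^vee for all b, where the dual basis is characterised by
   tau(b' b^vee) = delta_{b,b'}. *)
Definition dag_symmetric_basis (tau : H -> K) (dag : H -> H) (B : seq H)
  : Prop :=
  basis_of fullv B /\
  forall i j : nat, (i < size B)%N -> (j < size B)%N ->
    tau (B`_i * dag B`_j) = (i == j)%:R.

Definition nu (B : seq H) (c : K) (d : nat) (rho : H -> 'M[K]_d) : K :=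
  (c * d%:R)^-1 * \sum_(b <- B) rep_char rho (b * b).

End HeckeDefs.

From HB Require Import structures.
From mathcomp Require Import all_boot all_order all_algebra.
From mathcomp Require Import falgebra.
From mathcomp Require Import ring.
From Stdlib Require Import Classical_Prop.
Set Implicit Arguments. Unset Strict Implicit. Unset Printing Implicit Defensive.
Import GRing.Theory.
Local Open Scope ring_scope.

(* Since [b^dag] is the dual basis of [b], the average
   [sum_b rho_E(b) A rho_F(b^dag)] intertwines the actions of E and F for any
   matrix A. By Schur's lemma it vanishes unless F = E, and expanding
   [1 = sum_b tau(b) b^dag] with [tau = sum_i chi_i / c_i] shows that for
   F = E it is the scalar [c_E tr A] (the orthogonality relations).
   Now nu_E is a trace of this average for F = E^, so nu_E = 0 if E is not
   isomorphic to E^. Otherwise E carries a non-degenerate invariant form M,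
   unique up to a scalar because H is split; hence M^T = a M with a = 1 or -1,
   and the average turns nu_E into a, whatever the basis. Finally a = 1 for
   symmetric and a = -1 for alternating forms (K has characteristic 0). *)

Section LinearHypothesis.
Variables (R : pzRingType) (V W : lmodType R) (f : V -> W).
Hypothesis f_lin : forall a x y, f (a *: x + y) = a *: f x + f y.

Lemma lin0 : f 0 = 0.
Proof.
have := f_lin 1 0 0; rewrite scaler0 addr0 scale1r.
by rewrite -{1}(addr0 (f 0)) => /addrI ->.
Qed.

Lemma linD x y : f (x + y) = f x + f y.
Proof. by have := f_lin 1 x y; rewrite !scale1r. Qed.

Lemma linZ a x : f (a *: x) = a *: f x.
Proof. by have := f_lin a x 0; rewrite !addr0 lin0 addr0. Qed.

Lemma lin_sum (I : Type) (r : seq I) (P : pred I) (F : I -> V) :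
  f (\sum_(i <- r | P i) F i) = \sum_(i <- r | P i) f (F i).
Proof. exact: (big_morph f linD lin0). Qed.

End LinearHypothesis.

Section LinearFormHypothesis.
Variables (R : pzRingType) (V : lmodType R) (f : V -> R).
Hypothesis f_lin : forall a x y, f (a *: x + y) = a * f x + f y.
Let f_reg : V -> R^o := f.
Let f_linear : forall a x y, f_reg (a *: x + y) = a *: f_reg x + f_reg y := f_lin.

Lemma form0 : f 0 = 0.
Proof. exact: lin0 f_linear. Qed.

Lemma formZ a x : f (a *: x) = a * f x.
Proof. exact: linZ f_linear a x. Qed.

Lemma formD x y : f (x + y) = f x + f y.
Proof. exact: linD f_linear x y. Qed.

Lemma form_sum (I : Type) (r : seq I) (P : pred I) (F : I -> V) :
  f (\sum_(i <- r | P i) F i) = \sum_(i <- r | P i) f (F i).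
Proof. exact: (big_morph f formD form0). Qed.

End LinearFormHypothesis.

Section DeltaTrace.
Variable R : pzRingType.

Lemma mulmx_deltaE m1 m2 m3 m4 (M : 'M[R]_(m1, m2)) (j : 'I_m2) (p : 'I_m3)
    (N : 'M[R]_(m3, m4)) u v :
  (M *m delta_mx j p *m N) u v = M u j * N p v.
Proof.
rewrite !mxE (bigD1 p) //= big1 ?addr0; last first.
  move=> k /negbTE nk; rewrite !mxE (bigD1 j) //= big1 ?addr0.
    by rewrite !mxE eqxx nk /= mulr0 mul0r.
  by move=> l /negbTE nl; rewrite !mxE nl /= mulr0.
rewrite !mxE (bigD1 j) //= big1 ?addr0; first by rewrite !mxE !eqxx mulr1.
by move=> l /negbTE nl; rewrite !mxE nl /= mulr0.
Qed.

Lemma mxtrace_delta_mul n (u p : 'I_n) (P : 'M[R]_n) :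
  \tr (delta_mx u p *m P) = P p u.
Proof.
rewrite -[delta_mx u p]mul1mx /mxtrace (bigD1 u) //= big1 ?addr0.
  by rewrite mulmx_deltaE !mxE eqxx mul1r.
by move=> k /negbTE nk; rewrite mulmx_deltaE !mxE nk mul0r.
Qed.

Lemma mxtrace_mul_deltaE n (X Y : 'M[R]_n) :
  \tr (X *m Y) = \sum_p \sum_u (X *m delta_mx u p *m Y^T) p u.
Proof.
rewrite /mxtrace; apply: eq_bigr => p _; rewrite mxE.
by apply: eq_bigr => u _; rewrite mulmx_deltaE mxE.
Qed.

End DeltaTrace.

Section BilinearForms.
Variables (K : fieldType) (n : nat).
Implicit Types (M N : 'M[K]_n) (v w : 'cV[K]_n).

Lemma bform_delta M (j k : 'I_n) : bform M (delta_mx j 0) (delta_mx k 0) = M j k.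
Proof.
rewrite /bform trmx_delta -mulmxA -[delta_mx 0 j]mul1mx mulmx_deltaE.
by rewrite -[M *m _]mulmx1 mulmx_deltaE !mxE !eqxx mul1r mulr1.
Qed.

Lemma bform_inj M N : (forall v w, bform M v w = bform N v w) -> M = N.
Proof. by move=> eMN; apply/matrixP => j k; rewrite -!bform_delta eMN. Qed.

Lemma bform_mull M (A : 'M[K]_n) v w : bform M (A *m v) w = bform (A^T *m M) v w.
Proof. by rewrite /bform trmx_mul !mulmxA. Qed.

Lemma bform_mulr M (A : 'M[K]_n) v w : bform M v (A *m w) = bform (M *m A) v w.
Proof. by rewrite /bform !mulmxA. Qed.

Lemma bform_swap M v w : bform M w v = bform M^T v w.
Proof.
rewrite /bform.
have <- : (w^T *m M *m v)^T = v^T *m M^T *m w by rewrite !trmx_mul trmxK mulmxA.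
by rewrite [RHS]mxE.
Qed.

Lemma bformDl M v1 v2 w : bform M (v1 + v2) w = bform M v1 w + bform M v2 w.
Proof. by rewrite /bform linearD /= !mulmxDl mxE. Qed.

Lemma bformDr M v w1 w2 : bform M v (w1 + w2) = bform M v w1 + bform M v w2.
Proof. by rewrite /bform mulmxDr mxE. Qed.

Lemma bformN M v w : bform (- M) v w = - bform M v w.
Proof. by rewrite /bform mulmxN mulNmx mxE. Qed.

Lemma bform_nondegenerateP M : bform_nondegenerate M <-> M \in unitmx.
Proof.
have left_kernel0 N v : N \in unitmx -> (forall w, bform N v w = 0) -> v = 0.
  move=> Nu vN0; apply: trmx_inj; rewrite trmx0 -[v^T](mulmxK Nu).
  suff -> : v^T *m N = 0 by rewrite mul0mx.
  apply/matrixP => i k; rewrite (ord1 i) [RHS]mxE.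
  have := vN0 (delta_mx k 0).
  by rewrite /bform -[_ *m delta_mx k 0]mulmx1 mulmx_deltaE !mxE eqxx mulr1.
split=> [[nd _] | Mu].
  rewrite -row_free_unit -kermx_eq0; apply/rowV0P => u /sub_kermxP uM0.
  apply: trmx_inj; rewrite trmx0; apply: nd => w.
  by rewrite /bform trmxK uM0 mul0mx mxE.
split=> [v | w] vM0; first exact: left_kernel0 Mu vM0.
by apply: (left_kernel0 M^T); rewrite ?unitmx_tr // => v; rewrite -bform_swap.
Qed.

Lemma bform_symmetricP M : bform_symmetric M <-> M^T = M.
Proof.
split=> [sM | MT v w]; last by rewrite bform_swap MT.
by apply: bform_inj => v w; rewrite -bform_swap sM.
Qed.

Lemma bform_alternatingP M : 2%:R != 0 :> K -> bform_alternating M <-> M^T = - M.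
Proof.
move=> two; split=> [aM | MT v].
  apply: bform_inj => v w; rewrite bformN -bform_swap.
  have := aM (v + w); rewrite bformDl !bformDr !aM add0r addr0 => /eqP.
  by rewrite addrC addr_eq0 => /eqP.
have := bform_swap M v v; rewrite MT bformN => /eqP.
by rewrite -addr_eq0 -mulr2n -mulr_natr mulf_eq0 (negbTE two) orbF => /eqP.
Qed.

Lemma trmx_scale_sign M a : M != 0 -> M^T = a *: M -> a = 1 \/ a = -1.
Proof.
move=> M0 MT; have : (a * a - 1) *: M = 0.
  by rewrite scalerBl -scalerA -MT -linearZ /= -MT trmxK scale1r subrr.
move/eqP; rewrite scaler_eq0 (negbTE M0) orbF subr_eq0 -expr2 sqrf_eq1.
by case/orP => /eqP ->; [left | right].
Qed.

End BilinearForms.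

Section Representations.
Variables (K : fieldType) (H : falgType K).

Lemma contragredient_rep (dag : H -> H) n (rho : H -> 'M[K]_n) :
  anti_involution dag -> is_rep rho -> is_rep (contragredient dag rho).
Proof.
move=> [dag_lin [dagM dagK]] [rho_lin [rho1 rhoM]].
have dag1 : dag 1 = 1 by rewrite -[LHS]mulr1 -[X in _ * X]dagK -dagM mulr1 dagK.
split; last split.
- by move=> a x y; rewrite /contragredient dag_lin rho_lin linearD linearZ.
- by rewrite /contragredient dag1 rho1 trmx1.
- by move=> x y; rewrite /contragredient dagM rhoM trmx_mul.
Qed.

Lemma rep_isoP n (rho1 rho2 : H -> 'M[K]_n) :
  rep_iso rho1 rho2 <->
  exists2 P, P \in unitmx & forall h, P *m rho1 h = rho2 h *m P.
Proof.
split=> [[P [Pfree _ Pint]] | [P Pu Pint]].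
  by exists P; rewrite -?row_free_unit.
by exists P; rewrite row_free_unit row_full_unit.
Qed.

Lemma bform_invariantP (dag : H -> H) n (rho : H -> 'M[K]_n) (M : 'M[K]_n) :
  bform_invariant dag rho M <-> forall h, (rho h)^T *m M = M *m rho (dag h).
Proof.
split=> [invM h | MT h v w]; last by rewrite bform_mull bform_mulr MT.
by apply: bform_inj => v w; rewrite -bform_mull -bform_mulr invM.
Qed.

(* The Gram matrix of an invariant form is the transpose of an isomorphism
   onto the contragredient. *)
Lemma rep_iso_contragredientP (dag : H -> H) n (rho : H -> 'M[K]_n) :
  rep_iso rho (contragredient dag rho) <->
  exists M, bform_nondegenerate M /\ bform_invariant dag rho M.
Proof.
rewrite rep_isoP; split=> [[P Pu Pint] | [M [/bform_nondegenerateP Mu]]].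
  exists P^T; rewrite bform_nondegenerateP unitmx_tr bform_invariantP.
  by split=> // h; rewrite -trmx_mul Pint trmx_mul trmxK.
move/bform_invariantP => Mint; exists M^T; rewrite ?unitmx_tr // => h.
by rewrite /contragredient -trmx_mul -Mint trmx_mul trmxK.
Qed.

Lemma intertwiner0_or_row_free n1 (rho1 : H -> 'M[K]_n1) n2 (rho2 : H -> 'M[K]_n2)
    (G : 'M[K]_(n1, n2)) :
  rep_simple rho1 -> (forall h, rho1 h *m G = G *m rho2 h) -> G = 0 \/ row_free G.
Proof.
move=> [_ [_ rho1_simple]] Gint.
have imG_sub : rep_submodule rho1 <<G^T>>%MS.
  have imG_le : (<<G^T>> <= G^T)%MS by rewrite genmxE.
  move=> h; apply: submx_trans (submxMr _ imG_le) _.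
  by rewrite genmxE -trmx_mul Gint trmx_mul submxMl.
have [imG0 | imG_full] := rho1_simple _ imG_sub.
  left; apply: trmx_inj; rewrite trmx0; apply/eqP.
  by rewrite -submx0 -imG0 genmxE.
by right; move: imG_full; rewrite genmxE sub1mx /row_full /row_free mxrank_tr.
Qed.

Lemma intertwiner0_or_row_full n1 (rho1 : H -> 'M[K]_n1) n2 (rho2 : H -> 'M[K]_n2)
    (G : 'M[K]_(n1, n2)) :
  rep_simple rho2 -> (forall h, rho1 h *m G = G *m rho2 h) -> G = 0 \/ row_full G.
Proof.
move=> [_ [_ rho2_simple]] Gint.
have kerG_sub : rep_submodule rho2 (kermx G^T).
  move=> h; rewrite sub_kermx -mulmxA -trmx_mul -Gint trmx_mul mulmxA.
  by rewrite mulmx_ker mul0mx.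
have [kerG0 | kerG_full] := rho2_simple _ kerG_sub.
  right; move: (mxrank_ker G^T); rewrite kerG0 mxrank0 mxrank_tr => /esym/eqP.
  rewrite subn_eq0 /row_full => le.
  by rewrite eqn_leq le andbT -mxrank_tr rank_leq_row.
left; apply: trmx_inj; rewrite trmx0.
by move: kerG_full; rewrite sub_kermx mul1mx => /eqP.
Qed.

End Representations.

Section DualBasis.
Variables (K : fieldType) (H : falgType K) (tau : H -> K) (dag : H -> H).
Hypothesis Htau : symmetrizing_trace tau.
Variable B : seq H.
Hypothesis HB : dag_symmetric_basis tau dag B.

Let tau_lin := Htau.1.

Lemma tau_dual_basis (i j : 'I_(size B)) : tau (B`_i * dag B`_j) = (i == j)%:R.
Proof. exact: HB.2. Qed.

Lemma basis_expansion x : exists a : 'I_(size B) -> K, x = \sum_i a i *: B`_i.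
Proof.
exists (fun i => coord (in_tuple B) i x).
by apply: (coord_basis (U := fullv)); [exact: HB.1 | exact: memvf].
Qed.

Lemma dual_basis_expansion x : x = \sum_(i < size B) tau (x * dag B`_i) *: B`_i.
Proof.
have [a xE] := basis_expansion x.
suff coord_a (i : 'I_(size B)) : tau (x * dag B`_i) = a i.
  by under eq_bigr do rewrite coord_a.
rewrite {1}xE mulr_suml (form_sum tau_lin).
under eq_bigr do rewrite -scalerAl (formZ tau_lin) tau_dual_basis.
rewrite (bigD1 i) //= eqxx mulr1 big1 ?addr0 // => j /negbTE ->.
by rewrite mulr0.
Qed.

Lemma dual_basis_expansion_dag x :
  x = \sum_(i < size B) tau (B`_i * x) *: dag B`_i.
Proof.
apply/eqP; rewrite -subr_eq0; apply/eqP.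
set y := x - _; apply: Htau.2.2 => z.
have tau_by (j : 'I_(size B)) : tau (B`_j * y) = 0.
  rewrite /y mulrBr (formD tau_lin) -scaleN1r (formZ tau_lin) mulr_sumr.
  rewrite (form_sum tau_lin).
  under eq_bigr do rewrite -scalerAr (formZ tau_lin) tau_dual_basis.
  rewrite (bigD1 j) //= eqxx mulr1 big1 ?addr0; first by rewrite mulN1r subrr.
  by move=> i; rewrite eq_sym => /negbTE ->; rewrite mulr0.
have [a ->] := basis_expansion z.
rewrite Htau.2.1 mulr_suml (form_sum tau_lin) big1 // => i _.
by rewrite -scalerAl (formZ tau_lin) tau_by mulr0.
Qed.

Lemma rep_dual_basis_expansion n (rho : H -> 'M[K]_n) x : is_rep rho ->
  rho x = \sum_(i < size B) tau (x * dag B`_i) *: rho B`_i.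
Proof.
move=> [rho_lin _]; rewrite {1}(dual_basis_expansion x) (lin_sum rho_lin).
by under eq_bigr do rewrite (linZ rho_lin).
Qed.

Lemma rep_dual_basis_expansion_dag n (rho : H -> 'M[K]_n) x : is_rep rho ->
  rho x = \sum_(i < size B) tau (B`_i * x) *: rho (dag B`_i).
Proof.
move=> [rho_lin _]; rewrite {1}(dual_basis_expansion_dag x) (lin_sum rho_lin).
by under eq_bigr do rewrite (linZ rho_lin).
Qed.

Definition avgmx m1 m2 (rho1 : H -> 'M[K]_m1) (rho2 : H -> 'M[K]_m2)
    (A : 'M[K]_(m1, m2)) :=
  \sum_(i < size B) rho1 B`_i *m A *m rho2 (dag B`_i).

(* Expanding [h b_i] and [b_j^dag h] in the two dual bases, both sides become
   [sum_(i,j) tau(h b_i b_j^dag) rho1(b_j) A rho2(b_i^dag)], as [tau] is a trace. *)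
Lemma avgmx_intertwines m1 m2 (rho1 : H -> 'M[K]_m1) (rho2 : H -> 'M[K]_m2) A h :
  is_rep rho1 -> is_rep rho2 ->
  rho1 h *m avgmx rho1 rho2 A = avgmx rho1 rho2 A *m rho2 h.
Proof.
move=> rep1 rep2.
transitivity (\sum_(i < size B) \sum_(j < size B)
   tau (h * B`_i * dag B`_j) *: (rho1 B`_j *m A *m rho2 (dag B`_i))).
  rewrite /avgmx mulmx_sumr; apply: eq_bigr => i _.
  rewrite !mulmxA -rep1.2.2 (rep_dual_basis_expansion _ rep1) !mulmx_suml.
  by apply: eq_bigr => j _; rewrite !scalemxAl.
rewrite exchange_big /=.
transitivity (\sum_(j < size B) \sum_(i < size B)
   tau (B`_i * (dag B`_j * h)) *: (rho1 B`_j *m A *m rho2 (dag B`_i))).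
  apply: eq_bigr => j _; apply: eq_bigr => i _.
  by rewrite [in RHS]mulrA [in RHS]Htau.2.1 mulrA.
rewrite /avgmx mulmx_suml; apply: eq_bigr => j _.
rewrite -!mulmxA -rep2.2.2 (rep_dual_basis_expansion_dag _ rep2) !mulmx_sumr.
by apply: eq_bigr => i _; rewrite -!scalemxAr !mulmxA.
Qed.

Lemma avgmx_sum m1 m2 (rho1 : H -> 'M[K]_m1) (rho2 : H -> 'M[K]_m2)
    (J : Type) (r : seq J) (F : J -> 'M[K]_(m1, m2)) :
  avgmx rho1 rho2 (\sum_(x <- r) F x) = \sum_(x <- r) avgmx rho1 rho2 (F x).
Proof.
rewrite /avgmx; under eq_bigr do rewrite mulmx_sumr mulmx_suml.
exact: exchange_big.
Qed.

Lemma avgmxZ m1 m2 (rho1 : H -> 'M[K]_m1) (rho2 : H -> 'M[K]_m2) a A :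
  avgmx rho1 rho2 (a *: A) = a *: avgmx rho1 rho2 A.
Proof.
rewrite /avgmx scaler_sumr; apply: eq_bigr => i _.
by rewrite -scalemxAr -scalemxAl.
Qed.

Lemma avgmx_delta_trace m1 m2 (rho1 : H -> 'M[K]_m1) (rho2 : H -> 'M[K]_m2) p q :
  \sum_(i < size B) \tr (rho1 B`_i) * rho2 (dag B`_i) p q =
  \sum_(j < m1) avgmx rho1 rho2 (delta_mx j p) j q.
Proof.
under [RHS]eq_bigr do rewrite summxE.
rewrite exchange_big /=; apply: eq_bigr => i _.
rewrite /mxtrace mulr_suml; apply: eq_bigr => j _.
by rewrite mulmx_deltaE.
Qed.

End DualBasis.

Section SchurElements.
Variables (K : fieldType) (H : falgType K) (tau : H -> K) (dag : H -> H).
Hypothesis Hsplit : split_semisimple_alg H.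
Hypothesis Htau : symmetrizing_trace tau.
Hypothesis Hdag : anti_involution dag.
Variable B : seq H.
Hypothesis HB : dag_symmetric_basis tau dag B.
Variables (I : finType) (d : I -> nat) (rho : forall i : I, H -> 'M[K]_(d i)).
Hypothesis Hsimple : forall i : I, rep_simple (rho i).
Hypothesis Hdistinct : forall i j : I, rep_iso (rho i) (rho j) -> i = j.
Variable c : I -> K.
Hypothesis Hc0 : forall i : I, c i != 0.
Hypothesis Hschur : forall h : H, tau h = \sum_(i : I) (c i)^-1 * rep_char (rho i) h.
Variable E : I.

Local Notation avg := (avgmx dag B).

Let rho_rep i : is_rep (rho i) := (Hsimple i).1.

Lemma avgmx_neq0 i (A : 'M[K]_(d i, d E)) : i != E -> avg (rho i) (rho E) A = 0.
Proof.
move=> /eqP iNE.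
have Aint h : rho i h *m avg (rho i) (rho E) A = avg (rho i) (rho E) A *m rho E h.
  exact: (avgmx_intertwines Htau HB).
have [//|Afree] := intertwiner0_or_row_free (Hsimple i) Aint.
have [//|Afull] := intertwiner0_or_row_full (Hsimple E) Aint.
case: iNE; apply/esym/Hdistinct.
by exists (avg (rho i) (rho E) A); split => // h; rewrite Aint.
Qed.

Lemma avgmx_scalar (A : 'M[K]_(d E)) : exists a, avg (rho E) (rho E) A = a%:M.
Proof.
by apply: Hsplit.2 (Hsimple E) _ _ => h; rewrite (avgmx_intertwines Htau HB).
Qed.

(* Expand [1 = sum_b tau(b) b^vee] and [tau = sum_i chi_i / c_i]: only the
   summand [i = E] survives. *)
Lemma avgmx_delta_sum (p q : 'I_(d E)) :
  (1%:M : 'M[K]_(d E)) p q =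
  (c E)^-1 * \sum_j avg (rho E) (rho E) (delta_mx j p) j q.
Proof.
have avg_trace k : \sum_(i < size B)
    (c k)^-1 * rep_char (rho k) B`_i * rho E (dag B`_i) p q
  = (c k)^-1 * \sum_j avg (rho k) (rho E) (delta_mx j p) j q.
  rewrite -avgmx_delta_trace mulr_sumr; apply: eq_bigr => i _.
  by rewrite /rep_char mulrA.
rewrite -(rho_rep E).2.1 (rep_dual_basis_expansion_dag Htau HB 1 (rho_rep E)).
rewrite summxE.
under eq_bigr do rewrite mxE mulr1 Hschur mulr_suml.
rewrite exchange_big /= (bigD1 E) //= avg_trace [X in _ + X]big1 ?addr0 // => k kE.
by rewrite avg_trace big1 ?mulr0 // => j _; rewrite avgmx_neq0 // mxE.
Qed.

Lemma avgmx_delta (j k : 'I_(d E)) :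
  avg (rho E) (rho E) (delta_mx j k) = (c E * (j == k)%:R)%:M.
Proof.
have scalar_entry (A : 'M[K]_(d E)) u v : avg (rho E) (rho E) A u v =
    avg (rho E) (rho E) A v v *+ (u == v).
  by have [a ->] := avgmx_scalar A; rewrite !mxE eqxx mulr1n.
have [a aE] := avgmx_scalar (delta_mx j k).
have := avgmx_delta_sum k j.
rewrite (bigD1 j) //= big1 ?addr0; last first.
  by move=> u /negbTE uNj; rewrite scalar_entry uNj mulr0n.
rewrite aE !mxE eqxx mulr1n => eq_kj.
by rewrite eq_sym eq_kj mulrA mulfV ?mul1r.
Qed.

Lemma avgmx_self (A : 'M[K]_(d E)) : avg (rho E) (rho E) A = (c E * \tr A)%:M.
Proof.
rewrite {1}(matrix_sum_delta A) avgmx_sum.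
under eq_bigr do rewrite avgmx_sum.
transitivity (\sum_(j < d E) ((A j j * c E)%:M : 'M[K]_(d E))).
  apply: eq_bigr => j _; rewrite (bigD1 j) //= big1 ?addr0.
    by rewrite avgmxZ avgmx_delta eqxx mulr1 scale_scalar_mx.
  move=> k /negbTE kNj.
  by rewrite avgmxZ avgmx_delta eq_sym kNj mulr0 scale_scalar_mx mulr0 raddf0.
rewrite -(raddf_sum (@scalar_mx K (d E))) /mxtrace mulr_sumr.
by congr (_%:M); apply: eq_bigr => j _; rewrite mulrC.
Qed.

Local Notation rE := (rho E).
Local Notation rc := (contragredient dag (rho E)).

Lemma nu_avgmx :
  nu B (c E) rE =
  (c E * (d E)%:R)^-1 * \sum_p \sum_u avg rE rc (delta_mx u p) p u.
Proof.
rewrite /nu (big_nth 0) big_mkord; congr (_ * _).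
transitivity (\sum_(i < size B) \sum_p \sum_u
    (rE B`_i *m delta_mx u p *m rc (dag B`_i)) p u).
  apply: eq_bigr => i _; rewrite /rep_char (rho_rep E).2.2 mxtrace_mul_deltaE.
  by rewrite /contragredient Hdag.2.2.
rewrite exchange_big; apply: eq_bigr => p _ /=.
by rewrite exchange_big; apply: eq_bigr => u _ /=; rewrite summxE.
Qed.

Lemma nu_eq0_of_not_iso : ~ rep_iso rE rc -> nu B (c E) rE = 0.
Proof.
move=> not_iso; rewrite nu_avgmx.
suff avg0 A : avg rE rc A = 0.
  by rewrite big1 ?mulr0 // => p _; rewrite big1 // => u _; rewrite avg0 mxE.
set G := avg rE rc A.
have Gint h : rE h *m G = G *m rc h.
  apply: (avgmx_intertwines Htau HB); first exact: rho_rep.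
  exact: contragredient_rep.
have [//|Gfree] := intertwiner0_or_row_free (Hsimple E) Gint.
have Gu : G \in unitmx by rewrite -row_free_unit.
case: not_iso; apply/rep_isoP; exists (invmx G); rewrite ?unitmx_inv // => h.
by rewrite -[LHS](mulmxK Gu) -(mulmxA _ _ G) Gint mulmxA mulVmx // mul1mx.
Qed.

Lemma nu_of_intertwiner (P : 'M[K]_(d E)) a : (d E)%:R != 0 :> K ->
  P \in unitmx -> (forall h, P *m rE h = rc h *m P) -> P^T = a *: P ->
  nu B (c E) rE = a.
Proof.
move=> dE0 Pu Pint PT.
have avgP A : avg rE rc A = (c E * \tr (A *m P)) *: invmx P.
  have rcE h : rc h = P *m rE h *m invmx P by rewrite Pint mulmxK.
  rewrite /avgmx.
  under eq_bigr => i _ do rewrite rcE !mulmxA -(mulmxA (rE B`_i) A P).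
  by rewrite -mulmx_suml -/(avg rE rE (A *m P)) avgmx_self mul_scalar_mx.
rewrite nu_avgmx.
transitivity ((c E * (d E)%:R)^-1 * (c E * \tr (P^T *m invmx P))).
  congr (_ * _); rewrite /mxtrace mulr_sumr exchange_big.
  apply: eq_bigr => u _ /=.
  rewrite mxE mulr_sumr; apply: eq_bigr => p _.
  by rewrite avgP mxE mxtrace_delta_mul !mxE mulrA.
rewrite PT -scalemxAl mulmxV // mxtraceZ mxtrace1.
by field; rewrite dE0 Hc0.
Qed.

Lemma nu_of_invariant_form (M : 'M[K]_(d E)) a : (d E)%:R != 0 :> K ->
  bform_nondegenerate M -> bform_invariant dag rE M -> M^T = a *: M ->
  nu B (c E) rE = a.
Proof.
move=> dE0 /bform_nondegenerateP Mu /bform_invariantP Mint MT.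
apply: (nu_of_intertwiner (P := M^T)) => //; first by rewrite unitmx_tr.
  by move=> h; rewrite /contragredient -trmx_mul -Mint trmx_mul trmxK.
by rewrite trmxK; move/(congr1 trmx): MT; rewrite trmxK linearZ.
Qed.

(* Split-ness makes an invariant form unique up to a scalar, and its transpose
   is another one. *)
Lemma invariant_form_trmx_sign (M : 'M[K]_(d E)) :
  bform_nondegenerate M -> bform_invariant dag rE M ->
  exists2 a, a = 1 \/ a = -1 & M^T = a *: M.
Proof.
move=> /bform_nondegenerateP Mu /bform_invariantP Mint.
have dagK := Hdag.2.2.
have MTint h : (rE h)^T *m M^T = M^T *m rE (dag h).
  by rewrite -trmx_mul -[in LHS](dagK h) -Mint trmx_mul trmxK.
have invM_int h : invmx M *m (rE (dag h))^T = rE h *m invmx M.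
  by rewrite -[LHS](mulmxK Mu) -(mulmxA _ _ M) Mint dagK mulmxA mulVmx // mul1mx.
have [a aE] : exists a, invmx M *m M^T = a%:M.
  apply: Hsplit.2 (Hsimple E) _ _ => h.
  by rewrite -mulmxA -[in LHS](dagK h) -MTint mulmxA invM_int -mulmxA.
have MT : M^T = a *: M by rewrite -[M^T](mulKVmx Mu) aE mul_mx_scalar.
exists a => //; apply: trmx_scale_sign MT.
apply: contraTneq Mu => ->; rewrite -row_free_unit /row_free mxrank0.
by rewrite eq_sym -lt0n (Hsimple E).2.1.
Qed.

End SchurElements.

Theorem proposition2p5
  (K : fieldType) (H : falgType K)
  (charK0 : [pchar K] =i pred0)
  (tau : H -> K) (dag : H -> H)
  (Hsplit : split_semisimple_alg H)
  (Htau : symmetrizing_trace tau)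
  (Hdag : anti_involution dag)
  (B0 : seq H) (HB0 : dag_symmetric_basis tau dag B0)
  (I : finType) (d : I -> nat) (rho : forall i : I, H -> 'M[K]_(d i))
  (Hsimple : forall i : I, rep_simple (rho i))
  (Hdistinct : forall i j : I, rep_iso (rho i) (rho j) -> i = j)
  (Hcomplete : forall (n : nat) (sigma : H -> 'M[K]_n),
      rep_simple sigma -> exists i : I, rep_iso sigma (rho i))
  (c : I -> K) (Hc0 : forall i : I, c i != 0)
  (Hschur : forall h : H, tau h = \sum_(i : I) (c i)^-1 * rep_char (rho i) h)
  (E : I) :
  let nuE := nu B0 (c E) (rho E) in
  [/\ nuE = 0 \/ nuE = 1 \/ nuE = -1,
      nuE = 0 <-> ~ rep_iso (rho E) (contragredient dag (rho E)),
      nuE = 1 <-> rep_iso (rho E) (contragredient dag (rho E)) /\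
                  exists M : 'M[K]_(d E),
                    [/\ bform_nondegenerate M, bform_symmetric M
                      & bform_invariant dag (rho E) M],
      nuE = -1 <-> rep_iso (rho E) (contragredient dag (rho E)) /\
                  exists M : 'M[K]_(d E),
                    [/\ bform_nondegenerate M, bform_alternating M
                      & bform_invariant dag (rho E) M]
    & forall B1 : seq H, dag_symmetric_basis tau dag B1 ->
        nu B1 (c E) (rho E) = nuE].
Proof.
(* [Hcomplete] is unused: [Hschur] already accounts for all simple modules. *)
move=> nuE; have natK0 := (pcharf0P K).1 charK0.
have dE0 : (d E)%:R != 0 :> K by rewrite natK0 -lt0n (Hsimple E).2.1.
have two : 2%:R != 0 :> K by rewrite natK0.
have nu_of_form B M a : dag_symmetric_basis tau dag B -> bform_nondegenerate M ->
    bform_invariant dag (rho E) M -> M^T = a *: M -> nu B (c E) (rho E) = a.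
  move=> HB.
  exact (nu_of_invariant_form Hsplit Htau Hdag HB Hsimple Hdistinct Hc0 Hschur dE0).
have [iso | not_iso] := classic (rep_iso (rho E) (contragredient dag (rho E))).
  have [M [ndM invM]] := (rep_iso_contragredientP _ _).1 iso.
  have [a a_sign MT] := invariant_form_trmx_sign Hsplit Hdag Hsimple ndM invM.
  have nuB B : dag_symmetric_basis tau dag B -> nu B (c E) (rho E) = a.
    by move=> HB; exact: nu_of_form HB ndM invM MT.
  rewrite /nuE nuB //; split; [by right | | | | by move=> B1 /nuB].
  - by split=> // a0; case: a_sign a0 => -> /eqP; rewrite ?oppr_eq0 oner_eq0.
  - split=> [a1 | [_ [N [ndN /bform_symmetricP NT invN]]]].
      split=> //; exists M; split=> //.
      by apply/bform_symmetricP; rewrite MT a1 scale1r.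
    by rewrite -(nuB _ HB0) (nu_of_form _ N 1 HB0 ndN invN) // NT scale1r.
  - split=> [a1 | [_ [N [ndN /(bform_alternatingP _ two) NT invN]]]].
      split=> //; exists M; split=> //.
      by apply/(bform_alternatingP _ two); rewrite MT a1 scaleN1r.
    by rewrite -(nuB _ HB0) (nu_of_form _ N (-1) HB0 ndN invN) // NT scaleN1r.
have nuB B : dag_symmetric_basis tau dag B -> nu B (c E) (rho E) = 0.
  by move=> HB; exact (nu_eq0_of_not_iso Htau Hdag HB Hsimple c not_iso).
rewrite /nuE nuB //; split; [by left | by [] | | | by move=> B1 /nuB].
- by split=> [/eqP | []//]; rewrite eq_sym oner_eq0.
- by split=> [/eqP | []//]; rewrite eq_sym oppr_eq0 oner_eq0.
Qed.
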